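(* Let $X$ be of $K3^{[n]}$-type, $n\ge2$, $\Lambda:=H^2(X,\mathbb{Z})$, $\alpha\in\Lambda$ a primitive isotropic class, $d:=\gcd\{(\alpha,\lambda):\lambda\in\Lambda\}$, and $Q_\alpha:=\alpha^\perp_\Lambda/\mathbb{Z}\alpha$ with the induced pairing. Let $\iota:\Lambda\hookrightarrow\widetilde{\Lambda}$ be a primitive isometric embedding in the canonical orbit $\iota_X$, $\beta:=\iota(\alpha)$, $v$ a generator of the orthogonal complement of $\iota(\Lambda)$ in $\widetilde{\Lambda}$, $\Lambda_{k3}:=\beta^\perp_{\widetilde{\Lambda}}/\mathbb{Z}\beta$ and $\bar v:=v+\mathbb{Z}\beta\in\Lambda_{k3}$. Then $Q_\alpha$ is isometric to the sublattice $\bar v^\perp$ of $\Lambda_{k3}$, and both are isometric to the orthogonal direct sum $E_8(-1)\oplus E_8(-1)\oplus U\oplus U\oplus\mathbb{Z}\lambda$ with $(\lambda,\lambda)=\frac{2-2n}{d^2}$.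
   Context: $K3^{[n]}$-type: deformation equivalent to the Hilbert scheme of $n$ points on a $K3$ surface; $\Lambda$ carries the Beauville-Bogomolov-Fujiki pairing. $U$ is the even unimodular rank $2$ lattice of signature $(1,1)$, $E_8(-1)$ the negative definite $E_8$ lattice, and the Mukai lattice $\widetilde{\Lambda}$ is $E_8(-1)^{\oplus2}\oplus U^{\oplus4}$. By a theorem of Markman, $X$ comes with a natural $O(\widetilde{\Lambda})$-orbit $\iota_X$ of primitive isometric embeddings $H^2(X,\mathbb{Z})\hookrightarrow\widetilde{\Lambda}$. *)

(* Lattices are represented as Z^r (row vectors 'rV[int]_r)
   equipped with a symmetric Gram matrix. *)
From HB Require Import structures.
From mathcomp Require Import all_boot all_order all_algebra.
Set Implicit Arguments. Unset Strict Implicit. Unset Printing Implicit Defensive.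
Import Order.TTheory GRing.Theory Num.Theory.
Local Open Scope ring_scope.

Definition bil (R : nzRingType) (r : nat) (G : 'M[R]_r) (x y : 'rV[R]_r) : R :=
  (x *m G *m y^T) 0 0.

Definition osum (R : nzRingType) (m k : nat) (A : 'M[R]_m) (B : 'M[R]_k)
  : 'M[R]_(m + k) := block_mx A 0 0 B.

(* Dynkin diagram of E8 (0-indexed, Bourbaki labelling) *)
Definition adjE8 (i j : nat) : bool :=
  let e a b := ((i == a) && (j == b)) || ((i == b) && (j == a)) in
  [|| e 0 2, e 2 3, e 3 4, e 4 5, e 5 6, e 6 7 | e 1 3]%N.

Definition E8m : 'M[int]_8 :=
  \matrix_(i < 8, j < 8) (if i == j then -2 else if adjE8 i j then 1 else 0).

Definition Uhyp : 'M[int]_2 := \matrix_(i < 2, j < 2) (if i == j then 0 else 1).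

(* K3^[n] lattice  E8(-1)^2 + U^3 + <2-2n>  (isometric to H^2(X,Z)) *)
Definition LK3n (n : nat) : 'M[int]_(8 + 8 + 2 + 2 + 2 + 1) :=
  osum (osum (osum (osum (osum E8m E8m) Uhyp) Uhyp) Uhyp)
       (const_mx (2 - 2 * (n%:Z))).

Definition Mukai : 'M[int]_(8 + 8 + 2 + 2 + 2 + 2) :=
  osum (osum (osum (osum (osum E8m E8m) Uhyp) Uhyp) Uhyp) Uhyp.

Definition Target (n : nat) (d : int) : 'M[rat]_(8 + 8 + 2 + 2 + 1) :=
  osum (map_mx (fun z : int => z%:~R) (osum (osum (osum E8m E8m) Uhyp) Uhyp))
       (const_mx ((2 - 2 * n%:R) / (d%:~R ^+ 2))).

Definition primitive (r : nat) (a : 'rV[int]_r) : Prop :=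
  a != 0 /\ forall (k : int) (y : 'rV[int]_r), a = k *: y -> `|k| = 1.

Definition is_gcd_pairing (r : nat) (G : 'M[int]_r) (a : 'rV[int]_r) (d : int)
  : Prop :=
  0 <= d /\ (forall l, (d %| bil G a l)%Z) /\
  (forall e : int, (forall l, (e %| bil G a l)%Z) -> (e %| d)%Z).

Definition prim_iso_emb (r s : nat) (G1 : 'M[int]_r) (G2 : 'M[int]_s)
  (M : 'M[int]_(r, s)) : Prop :=
  (forall x y : 'rV[int]_r, bil G2 (x *m M) (y *m M) = bil G1 x y) /\
  (forall x : 'rV[int]_r, x *m M = 0 -> x = 0) /\
  (forall (k : int) (y : 'rV[int]_s), k != 0 ->
     (exists x, x *m M = k *: y) -> exists x, x *m M = y).

Definition orth_gen (r s : nat) (G : 'M[int]_s) (M : 'M[int]_(r, s))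
  (v : 'rV[int]_s) : Prop :=
  (forall x : 'rV[int]_r, bil G (x *m M) v = 0) /\
  (forall w, (forall x : 'rV[int]_r, bil G (x *m M) w = 0) ->
     exists c : int, w = c *: v).

(* The quotient S / Z a (S a sublattice containing a, a isotropic, with the
   induced pairing) is isometric to the rational lattice (Z^k, T): there is a
   map f on S, additive on S, surjective, with kernel exactly Z a, carrying
   the pairing of S to that of T.  (f is the quotient map composed with the
   isometry.) *)
Definition iso_quot (r k : nat) (G : 'M[int]_r) (S : 'rV[int]_r -> Prop)
  (a : 'rV[int]_r) (T : 'M[rat]_k) : Prop :=
  exists f : 'rV[int]_r -> 'rV[int]_k,
    (forall x y, S x -> S y -> f (x + y) = f x + f y) /\
    (forall x, S x -> (f x = 0 <-> exists c : int, x = c *: a)) /\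
    (forall z, exists x, S x /\ f x = z) /\
    (forall x y, S x -> S y ->
       (bil G x y)%:~R = bil T (map_mx (fun z : int => z%:~R) (f x))
                              (map_mx (fun z : int => z%:~R) (f y))).

From HB Require Import structures.
From mathcomp Require Import all_boot all_order all_algebra.
From mathcomp Require Import ring zify.
From Stdlib Require Import ClassicalEpsilon.
Set Implicit Arguments. Unset Strict Implicit. Unset Printing Implicit Defensive.
Import Order.TTheory GRing.Theory Num.Theory.
Local Open Scope ring_scope.

(* Write H^2 = E8(-1)^2 + U1 + U2 + U3 + <2 - 2n>, with (e_i, f_i) the hyperbolic basis of
   U_i and delta the generator of <2 - 2n>. Eichler transvections are isometries, and a
   Euclidean descent on the pairing with f3, each step a composite of transvections, moves
   alpha to m e3 + m c f3 + k delta. There isotropy reads m^2 c = (n - 1) k^2, primitivity gives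
   gcd(m, k) = 1, hence m | n - 1 and d = |m|, and the map
   x |-> (x_E8, x_E8', x_U1, x_U2, k x_e3 - m x_delta) identifies alpha^perp / Z alpha with
   E8(-1)^2 + U^2 + <(2 - 2n) / m^2>: on alpha^perp the form restricted to U3 + <2 - 2n>
   has rank one. On the Mukai side, iota(Lambda) has corank one, so v^perp and iota(Lambda)
   span the same rational space and primitivity of iota gives v^perp = iota(Lambda); the
   second quotient is then the image of the first. *)

(** * Bilinear forms and Eichler transvections *)

Section Bilinear.
Variables (R : comNzRingType) (r : nat) (G : 'M[R]_r).
Local Notation B := (bil G).

Lemma bilDl x y z : B (x + y) z = B x z + B y z.
Proof. by rewrite /bil !mulmxDl mxE. Qed.
Lemma bilDr x y z : B x (y + z) = B x y + B x z.
Proof. by rewrite /bil linearD /= mulmxDr mxE. Qed.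
Lemma bilZl c x y : B (c *: x) y = c * B x y.
Proof. by rewrite /bil -!scalemxAl mxE. Qed.
Lemma bilZr c x y : B x (c *: y) = c * B x y.
Proof. by rewrite /bil linearZ /= -scalemxAr mxE. Qed.
Lemma bilNl x y : B (- x) y = - B x y.
Proof. by rewrite -scaleN1r bilZl mulN1r. Qed.
Lemma bilNr x y : B x (- y) = - B x y.
Proof. by rewrite -scaleN1r bilZr mulN1r. Qed.
Lemma bilBl x y z : B (x - y) z = B x z - B y z.
Proof. by rewrite bilDl bilNl. Qed.
Lemma bilBr x y z : B x (y - z) = B x y - B x z.
Proof. by rewrite bilDr bilNr. Qed.
Lemma bil0l x : B 0 x = 0.
Proof. by rewrite /bil !mul0mx mxE. Qed.
Lemma bil0r x : B x 0 = 0.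
Proof. by rewrite /bil trmx0 mulmx0 mxE. Qed.
Lemma bil_delta x i : B x (delta_mx 0 i) = (x *m G) 0 i.
Proof. by rewrite /bil trmx_delta -colE mxE. Qed.

Definition bilE := (bilDl, bilDr, bilBl, bilBr, bilZl, bilZr, bilNl, bilNr).

Hypothesis trG : G^T = G.

Lemma bilC x y : B x y = B y x.
Proof.
have E : (y *m G *m x^T)^T = x *m G *m y^T by rewrite !trmx_mul trmxK trG mulmxA.
by rewrite /bil -E mxE.
Qed.

Definition eichler (e a : 'rV[R]_r) (h : R) x :=
  x + B e x *: a - (B a x + h * B e x) *: e.

Variables (e a : 'rV[R]_r) (h : R).

Lemma eichler_pair x y :
  B (eichler e a h x) y = B x y + B e x * B a y - (B a x + h * B e x) * B e y.
Proof. by rewrite /eichler !bilE. Qed.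

Lemma eichlerD x y : eichler e a h (x + y) = eichler e a h x + eichler e a h y.
Proof. by rewrite /eichler !bilDr; apply/rowP => i; rewrite !mxE; ring. Qed.

Lemma eichlerZ c x : eichler e a h (c *: x) = c *: eichler e a h x.
Proof. by rewrite /eichler !bilZr; apply/rowP => i; rewrite !mxE; ring. Qed.

Hypotheses (ee : B e e = 0) (ea : B e a = 0) (aa : B a a = 2 * h).

Lemma eichler_iso x y : B (eichler e a h x) (eichler e a h y) = B x y.
Proof.
rewrite /eichler !bilE ?(bilC a e) ?(bilC x e) ?(bilC x a) ?(bilC y e) ?(bilC y a) ee ea aa.
ring.
Qed.

Lemma eichlerK : cancel (eichler e a h) (eichler e (- a) h).
Proof.
move=> x; rewrite /eichler !bilE (bilC a e) ee ea aa.
by apply/rowP => i; rewrite !mxE; ring.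
Qed.

End Bilinear.

Lemma bil_even_diag (r : nat) (G : 'M[int]_r) q : G^T = G ->
  (forall i, (2 %| G i i)%Z) -> (2 %| bil G q q)%Z.
Proof.
move=> trG Geven; rewrite (row_sum_delta q).
apply: (big_rec (fun s => (2 %| bil G s s)%Z)); first by rewrite bil0l.
move=> j s _ Hs; set c := q 0 j; set e := delta_mx 0 j.
have -> : bil G (c *: e + s) (c *: e + s) = c * c * G j j + 2 * (c * bil G s e) + bil G s s.
  by rewrite !bilE (bilC trG e s) /e bil_delta -rowE mxE; ring.
by apply: rpredD => //; apply: rpredD; [exact: dvdz_mull | exact: dvdz_mulr (dvdzz 2)].
Qed.

Lemma dvdz_row_unimodular (m : nat) (A A' : 'M[int]_m) (z : 'rV[int]_m) k :
  A *m A' = 1%:M -> (forall j, (k %| (z *m A) ord0 j)%Z) -> exists z', z = k *: z'.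
Proof.
move=> AA' kzA; exists ((\row_j ((z *m A) ord0 j %/ k)%Z) *m A').
rewrite scalemxAl -[LHS]mulmx1 -AA' mulmxA; congr (_ *m _).
by apply/rowP => j; rewrite [RHS]mxE [X in _ * X]mxE mulrC divzK.
Qed.

Lemma dvdz_coprime_sq (m k a b : int) :
  coprimez m k -> m * m * b = a * k * k -> (m %| a)%Z.
Proof.
move=> cop mmb; have : (m %| a * k * k)%Z by rewrite -mmb -mulrA dvdz_mulr.
by rewrite Gauss_dvdzl // Gauss_dvdzl.
Qed.

Local Notation intr_mx := (map_mx (fun z : int => z%:~R : rat)).

Lemma bil_map_intr (r : nat) (G : 'M[int]_r) x y :
  bil (intr_mx G) (intr_mx x) (intr_mx y) = (bil G x y)%:~R.
Proof. by rewrite /bil map_trmx -!map_mxM mxE. Qed.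

Lemma intr_mx_inj (m k : nat) : injective (intr_mx : 'M[int]_(m, k) -> 'M[rat]_(m, k)).
Proof.
move=> x y /matrixP xy; apply/matrixP => i j; move: (xy i j).
by rewrite !mxE => /eqP; rewrite eqr_int => /eqP.
Qed.

Lemma intr_mx0 (m k : nat) : intr_mx (0 : 'M[int]_(m, k)) = 0.
Proof. by apply/matrixP => i j; rewrite !mxE. Qed.

Lemma clear_denominators (k : nat) (u : 'rV[rat]_k) :
  exists2 D : int, D != 0 & exists x, intr_mx x = D%:~R *: u.
Proof.
exists (\prod_(j < k) denq (u 0 j)).
  by rewrite prodf_seq_neq0; apply/allP => j _; rewrite denq_neq0.
exists (\row_j (numq (u 0 j) * \prod_(i < k | i != j) denq (u 0 i))).
apply/rowP => j; rewrite !mxE intrM numqE [in RHS](bigD1 j) //= intrM; ring.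
Qed.

Lemma exists_int_kernel_row (m k : nat) (M : 'M[int]_(m, k)) :
  (\rank (intr_mx M) < m)%N -> exists2 x : 'rV[int]_m, x != 0 & x *m M = 0.
Proof.
move=> rkM; have : kermx (intr_mx M) != 0.
  by rewrite -mxrank_eq0 mxrank_ker subn_eq0 -ltnNge.
case/matrix0Pn => i [j kij]; set u := row i (kermx (intr_mx M)).
have uM : u *m intr_mx M = 0 by rewrite /u -row_mul mulmx_ker row0.
have [D D0 [x xu]] := clear_denominators u.
have xM : x *m M = 0.
  by apply: intr_mx_inj; rewrite map_mxM xu -scalemxAl uM scaler0 intr_mx0.
exists x => //; apply: contra kij => /eqP x0.
move: xu; rewrite x0 intr_mx0 => /esym/eqP; rewrite scaler_eq0 intr_eq0 (negbTE D0) /=.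
by move=> /eqP/rowP/(_ j); rewrite !mxE => ->.
Qed.

Lemma int_inj_rank (m k : nat) (M : 'M[int]_(m, k)) :
  (forall x : 'rV[int]_m, x *m M = 0 -> x = 0) -> \rank (intr_mx M) = m.
Proof.
move=> injM; apply/eqP; rewrite eqn_leq rank_leq_row leqNgt; apply/negP.
by case/exists_int_kernel_row => x /negP x0 /injM xM0; apply: x0; rewrite xM0.
Qed.

Section LatticeAuto.
Variables (r : nat) (G : 'M[int]_r).
Local Notation B := (bil G).

Definition lattice_auto (g : 'rV[int]_r -> 'rV[int]_r) : Prop :=
  [/\ forall x y, B (g x) (g y) = B x y, {morph g : x y / x + y},
      forall (c : int) x, g (c *: x) = c *: g x & bijective g].

Lemma lattice_auto_id : lattice_auto id.
Proof. by split => //; exists id. Qed.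

Lemma lattice_auto_comp g1 g2 :
  lattice_auto g1 -> lattice_auto g2 -> lattice_auto (g2 \o g1).
Proof.
case=> i1 a1 s1 b1 [i2 a2 s2 b2]; split.
- by move=> x y /=; rewrite i2 i1.
- by move=> x y /=; rewrite a1 a2.
- by move=> c x /=; rewrite s1 s2.
- exact: bij_comp.
Qed.

Lemma lattice_auto_inv g : lattice_auto g ->
  exists g', [/\ lattice_auto g', cancel g g' & cancel g' g].
Proof.
case=> ib ad sc [g' gK g'K]; exists g'; split => //; split.
- by move=> x y; rewrite -ib !g'K.
- by move=> x y; apply: (can_inj gK); rewrite ad !g'K.
- by move=> c x; apply: (can_inj gK); rewrite sc !g'K.
- by exists g.
Qed.

Lemma eichler_auto e a h : G^T = G -> B e e = 0 -> B e a = 0 -> B a a = 2 * h ->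
  lattice_auto (eichler G e a h).
Proof.
move=> trG ee ea aa; split.
- exact: eichler_iso.
- exact: eichlerD.
- exact: eichlerZ.
- exists (eichler G e (- a) h); first exact (eichlerK trG ee ea aa).
  have ea' : B e (- a) = 0 by rewrite bilNr ea oppr0.
  have aa' : B (- a) (- a) = 2 * h by rewrite bilNl bilNr opprK.
  by move=> x; have := eichlerK trG ee ea' aa' x; rewrite opprK.
Qed.

Lemma primitive_auto g a : lattice_auto g -> primitive a -> primitive (g a).
Proof.
move=> /lattice_auto_inv [g' [[_ _ g'Z _] gK g'K]] [a0 aprim]; split.
  have g'0 : g' 0 = 0 by rewrite -(scale0r (0 : 'rV[int]_r)) g'Z !scale0r.
  by apply: contra a0 => /eqP ga0; rewrite -(gK a) ga0 g'0.
by move=> k y gay; apply: (aprim k (g' y)); rewrite -g'Z -gay gK.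
Qed.

Lemma gcd_pairing_auto g a d : lattice_auto g ->
  is_gcd_pairing G a d -> is_gcd_pairing G (g a) d.
Proof.
move=> autog [d0 [dd dmax]]; have [g' [_ _ g'K]] := lattice_auto_inv autog.
case: autog => gB _ _ _; split=> //; split=> [l|e el]; first by rewrite -(g'K l) gB.
by apply: dmax => l; rewrite -gB.
Qed.

Lemma iso_quot_auto (k : nat) (T : 'M[rat]_k) g a : lattice_auto g ->
  iso_quot G (fun x => B (g a) x = 0) (g a) T ->
  iso_quot G (fun x => B a x = 0) a T.
Proof.
move=> autog; have [g' [_ gK g'K]] := lattice_auto_inv autog.
case: autog => gB gD gZ _ [f [fD [fK [fS fB]]]].
exists (f \o g); split; [|split; [|split]] => /=.
- by move=> x y ax ay; rewrite gD fD ?gB.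
- move=> x ax; rewrite fK ?gB //; split=> -[c xc]; exists c.
    by apply: (can_inj gK); rewrite gZ.
  by rewrite xc gZ.
- move=> z; have [y [ay fy]] := fS z.
  by exists (g' y); rewrite -gB !g'K.
- by move=> x y ax ay; rewrite -fB ?gB.
Qed.

End LatticeAuto.

Section Embedding.
Variables (r s : nat) (G1 : 'M[int]_r) (G2 : 'M[int]_s) (M : 'M[int]_(r, s)).
Hypotheses (isoM : forall x y, bil G2 (x *m M) (y *m M) = bil G1 x y)
  (injM : forall x : 'rV[int]_r, x *m M = 0 -> x = 0).

Lemma embed_inj : injective (fun x : 'rV[int]_r => x *m M).
Proof.
move=> x y /= xy; apply/eqP; rewrite -subr_eq0; apply/eqP/injM.
by rewrite mulmxBl xy subrr.
Qed.

Definition embed_preim (w : 'rV[int]_s) : 'rV[int]_r :=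
  epsilon (inhabits 0) (fun x => x *m M = w).

Lemma embed_preimK x : embed_preim (x *m M) = x.
Proof.
apply: embed_inj => /=.
by apply: (epsilon_spec (inhabits 0) (fun y => y *m M = x *m M)); exists x.
Qed.

Lemma iso_quot_embed (k : nat) (T : 'M[rat]_k) (S : 'rV[int]_r -> Prop)
    (S' : 'rV[int]_s -> Prop) a :
  (forall w, S' w <-> exists2 x, S x & x *m M = w) ->
  iso_quot G1 S a T -> iso_quot G2 S' (a *m M) T.
Proof.
move=> S'E [f [fD [fK [fS fB]]]].
exists (f \o embed_preim); split; [|split; [|split]] => /=.
- move=> _ _ /S'E[x Sx <-] /S'E[y Sy <-].
  by rewrite -mulmxDl !embed_preimK fD.
- move=> _ /S'E[x Sx <-]; rewrite embed_preimK fK //.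
  split=> -[c xc]; exists c; first by rewrite xc scalemxAl.
  by apply: embed_inj; rewrite /= xc scalemxAl.
- move=> z; have [x [Sx fx]] := fS z.
  by exists (x *m M); rewrite embed_preimK; split=> //; apply/S'E; exists x.
- by move=> _ _ /S'E[x Sx <-] /S'E[y Sy <-]; rewrite !embed_preimK isoM fB.
Qed.

End Embedding.

Section PerpImage.
Variables (r s : nat) (G1 : 'M[int]_r) (G Ginv : 'M[int]_s) (M : 'M[int]_(r, s))
  (v : 'rV[int]_s).
Hypotheses (rs : r.+1 = s) (trG : G^T = G) (GGinv : G *m Ginv = 1%:M)
  (emb : prim_iso_emb G1 G M) (vgen : orth_gen G M v).

Lemma orth_gen_neq0 : v != 0.
Proof.
have rk : (\rank (intr_mx (M *m G)^T) < s)%N.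
  by apply: leq_ltn_trans (rank_leq_col _) _; rewrite -rs.
have [x x0 xMG] := exists_int_kernel_row rk.
have MGx : M *m G *m x^T = 0 by rewrite -(trmxK (M *m G)) -trmx_mul xMG trmx0.
have orth y : bil G (y *m M) x = 0 by rewrite /bil -!mulmxA [M *m _]mulmxA MGx mulmx0 mxE.
have [c xv] := vgen.2 x orth.
by apply: contra x0 => /eqP v0; rewrite xv v0 scaler0.
Qed.

Lemma perp_in_image w : bil G v w = 0 -> exists x, x *m M = w.
Proof.
move=> vw; case: emb => [_ [injM primM]]; set A := intr_mx M.
have rkA : \rank A = r := int_inj_rank injM.
set u := intr_mx (v *m G).
have u0 : u != 0.
  apply: contra orth_gen_neq0 => /eqP uG0; apply/eqP.
  have vG0 : v *m G = 0 by apply: intr_mx_inj; rewrite intr_mx0.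
  by rewrite -[v]mulmx1 -GGinv mulmxA vG0 mul0mx.
set K := kermx u^T.
have rkK : \rank K = r.
  rewrite /K mxrank_ker mxrank_tr.
  have -> : \rank u = 1%N by apply/eqP; rewrite eqn_leq rank_leq_row lt0n mxrank_eq0.
  by rewrite -rs subn1.
have AK : (A <= K)%MS.
  apply/sub_kermxP; rewrite /A /u map_trmx -map_mxM.
  have -> : M *m (v *m G)^T = 0.
    apply/matrixP => i j; rewrite ord1 [RHS]mxE trmx_mul trG mulmxA.
    by have := vgen.1 (delta_mx 0 i); rewrite /bil -rowE -!row_mul mxE.
  exact: intr_mx0.
have KA : (K <= A)%MS by rewrite -(mxrank_leqif_sup AK).2 rkA rkK.
have wK : (intr_mx w <= K)%MS.
  apply/sub_kermxP; rewrite /u map_trmx -map_mxM.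
  have -> : w *m (v *m G)^T = 0.
    apply/rowP => i; rewrite ord1 trmx_mul trG mulmxA -[_ 0 0]/(bil G w v).
    by rewrite (bilC trG) vw mxE.
  exact: intr_mx0.
have [y wy] := submxP (submx_trans wK KA).
have [D D0 [x xy]] := clear_denominators y.
apply: (primM D w D0); exists x; apply: intr_mx_inj.
by rewrite map_mxM xy -scalemxAl -wy; apply/matrixP => i j; rewrite !mxE intrM.
Qed.

End PerpImage.

Lemma bil_osum (R : nzRingType) (m k : nat) (A : 'M[R]_m) (A' : 'M[R]_k) x y :
  bil (osum A A') x y = bil A (lsubmx x) (lsubmx y) + bil A' (rsubmx x) (rsubmx y).
Proof.
rewrite -{1}(hsubmxK x) -{1}(hsubmxK y) /bil /osum mul_row_block.
by rewrite !mulmx0 addr0 add0r tr_row_mx mul_row_col mxE.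
Qed.

Lemma bil_const (R : nzRingType) (c : R) (u w : 'rV[R]_1) :
  bil (const_mx c : 'M_1) u w = u 0 0 * c * w 0 0.
Proof. by rewrite /bil mxE big_ord1 !mxE big_ord1 !mxE. Qed.

Lemma tr_osum (R : nzRingType) (m k : nat) (A : 'M[R]_m) (A' : 'M[R]_k) :
  A^T = A -> A'^T = A' -> (osum A A')^T = osum A A'.
Proof. by move=> trA trA'; rewrite /osum tr_block_mx trA trA' !trmx0. Qed.

Lemma trE8m : E8m^T = E8m.
Proof.
apply/matrixP => i j; rewrite !mxE eq_sym.
by case: i => [[|[|[|[|[|[|[|[|i]]]]]]]] Hi] //; case: j => [[|[|[|[|[|[|[|[|j]]]]]]]] Hj].
Qed.

Lemma trUhyp : Uhyp^T = Uhyp.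
Proof. by apply/matrixP => i j; rewrite !mxE eq_sym. Qed.

Lemma trLK3n n : (LK3n n)^T = LK3n n.
Proof.
rewrite /LK3n; apply: tr_osum; last by rewrite trmx_const.
by do 3 apply: tr_osum (trUhyp); apply: tr_osum trE8m trE8m.
Qed.

Lemma trMukai : Mukai^T = Mukai.
Proof. by rewrite /Mukai; do 4 apply: tr_osum (trUhyp); apply: tr_osum trE8m trE8m. Qed.

(* Minus the inverse of the Cartan matrix of E8. *)
Definition E8inv : 'M[int]_8 := \matrix_(i < 8, j < 8)
  - (nth 0 (nth [::] [:: [:: 4; 5; 7; 10; 8; 6; 4; 2]; [:: 5; 8; 10; 15; 12; 9; 6; 3];
      [:: 7; 10; 14; 20; 16; 12; 8; 4]; [:: 10; 15; 20; 30; 24; 18; 12; 6];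
      [:: 8; 12; 16; 24; 20; 15; 10; 5]; [:: 6; 9; 12; 18; 15; 12; 8; 4];
      [:: 4; 6; 8; 12; 10; 8; 6; 3]; [:: 2; 3; 4; 6; 5; 4; 3; 2]] i) j)%:Z.

Lemma mulmx_E8m_inv : E8m *m E8inv = 1%:M.
Proof.
apply/matrixP => i j; rewrite !mxE !big_ord_recr big_ord0 /= !mxE.
by case: i => [[|[|[|[|[|[|[|[|i]]]]]]]] Hi] //; case: j => [[|[|[|[|[|[|[|[|j]]]]]]]] Hj].
Qed.

Lemma ord2_ind (P : 'I_2 -> Prop) : P 0 -> P 1 -> forall i, P i.
Proof.
move=> P0 P1 [[|[|//]] Hi].
  by rewrite (_ : Ordinal Hi = 0) //; apply/val_inj.
by rewrite (_ : Ordinal Hi = 1) //; apply/val_inj.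
Qed.

Lemma mulmx_Uhyp : Uhyp *m Uhyp = 1%:M.
Proof.
apply/matrixP; apply: ord2_ind; apply: ord2_ind;
  by rewrite !mxE !big_ord_recr big_ord0 /= !mxE.
Qed.

Definition uvec (a b : int) : 'rV[int]_2 := \row_j (if j == 0 then a else b).

Lemma uvec_0 a b : uvec a b 0 0 = a. Proof. by rewrite mxE. Qed.
Lemma uvec_1 a b : uvec a b 0 1 = b. Proof. by rewrite mxE. Qed.

Lemma uvec0 : uvec 0 0 = 0.
Proof. by apply/rowP => j; rewrite !mxE; case: ifP. Qed.

Lemma uvecZ c a b : c *: uvec a b = uvec (c * a) (c * b).
Proof. by apply/rowP => j; rewrite !mxE; case: ifP. Qed.

Lemma uvecE (u : 'rV[int]_2) : u = uvec (u 0 0) (u 0 1).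
Proof. by apply/rowP; apply: ord2_ind; rewrite mxE. Qed.

Lemma const_mx0 m k : const_mx 0 = 0 :> 'M[int]_(m, k).
Proof. by apply/matrixP => i j; rewrite !mxE. Qed.

Lemma const_mx11 (u : 'rV[int]_1) : const_mx (u 0 0) = u.
Proof. by apply/matrixP => i j; rewrite !ord1 mxE. Qed.

Lemma bil_Uhyp u w : bil Uhyp u w = u 0 0 * w 0 1 + u 0 1 * w 0 0.
Proof.
rewrite /bil !mxE !big_ord_recr !big_ord0 /= !mxE !big_ord_recr !big_ord0 /= !mxE /=.
rewrite (_ : widen_ord _ _ = 0); last exact: val_inj.
rewrite (_ : ord_max = 1); last exact: val_inj.
ring.
Qed.

Lemma mulmx_osum (m k : nat) (A A' : 'M[int]_m) (C C' : 'M[int]_k) :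
  osum A C *m osum A' C' = osum (A *m A') (C *m C').
Proof. by rewrite /osum mulmx_block !mulmx0 !mul0mx !addr0 !add0r. Qed.

Lemma osum1 (m k : nat) : osum (1%:M : 'M[int]_m) (1%:M : 'M[int]_k) = 1%:M.
Proof. by rewrite /osum -scalar_mx_block. Qed.

Lemma mulmx_Mukai_inv :
  Mukai *m osum (osum (osum (osum (osum E8inv E8inv) Uhyp) Uhyp) Uhyp) Uhyp = 1%:M.
Proof. by rewrite /Mukai !mulmx_osum mulmx_E8m_inv mulmx_Uhyp !osum1. Qed.

Notation vL := 'rV[int]_(8 + 8 + 2 + 2 + 2 + 1).

Definition lk3_vec (z1 z2 : 'rV[int]_8) (u1 u2 u3 : 'rV[int]_2) (t : 'rV[int]_1) : vL :=
  row_mx (row_mx (row_mx (row_mx (row_mx z1 z2) u1) u2) u3) t.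

Definition pE1 (x : vL) := lsubmx (lsubmx (lsubmx (lsubmx (lsubmx x)))).
Definition pE2 (x : vL) := rsubmx (lsubmx (lsubmx (lsubmx (lsubmx x)))).
Definition pU1 (x : vL) := rsubmx (lsubmx (lsubmx (lsubmx x))).
Definition pU2 (x : vL) := rsubmx (lsubmx (lsubmx x)).
Definition pU3 (x : vL) := rsubmx (lsubmx x).
Definition pD (x : vL) := rsubmx x.

Lemma lk3_vecK x : lk3_vec (pE1 x) (pE2 x) (pU1 x) (pU2 x) (pU3 x) (pD x) = x.
Proof. by rewrite /lk3_vec /pE1 /pE2 /pU1 /pU2 /pU3 /pD !hsubmxK. Qed.

Section Projections.
Variables (z1 z2 : 'rV[int]_8) (u1 u2 u3 : 'rV[int]_2) (t : 'rV[int]_1).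
Local Notation x := (lk3_vec z1 z2 u1 u2 u3 t).
Lemma pE1_vec : pE1 x = z1. Proof. by rewrite /pE1 !row_mxKl. Qed.
Lemma pE2_vec : pE2 x = z2. Proof. by rewrite /pE2 !row_mxKl row_mxKr. Qed.
Lemma pU1_vec : pU1 x = u1. Proof. by rewrite /pU1 !row_mxKl row_mxKr. Qed.
Lemma pU2_vec : pU2 x = u2. Proof. by rewrite /pU2 !row_mxKl row_mxKr. Qed.
Lemma pU3_vec : pU3 x = u3. Proof. by rewrite /pU3 row_mxKl row_mxKr. Qed.
Lemma pD_vec : pD x = t. Proof. by rewrite /pD row_mxKr. Qed.
End Projections.

Definition pvecE := (pE1_vec, pE2_vec, pU1_vec, pU2_vec, pU3_vec, pD_vec).

Lemma lk3_vecD z1 z2 u1 u2 u3 t z1' z2' u1' u2' u3' t' :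
  lk3_vec z1 z2 u1 u2 u3 t + lk3_vec z1' z2' u1' u2' u3' t' =
  lk3_vec (z1 + z1') (z2 + z2') (u1 + u1') (u2 + u2') (u3 + u3') (t + t').
Proof. by rewrite /lk3_vec !add_row_mx. Qed.

Lemma lk3_vec0 : lk3_vec 0 0 0 0 0 0 = 0.
Proof. by rewrite /lk3_vec !row_mx0. Qed.

Lemma lk3_vecZ c z1 z2 u1 u2 u3 t :
  c *: lk3_vec z1 z2 u1 u2 u3 t =
  lk3_vec (c *: z1) (c *: z2) (c *: u1) (c *: u2) (c *: u3) (c *: t).
Proof. by rewrite /lk3_vec !scale_row_mx. Qed.

Lemma bil_LK3n n x y : bil (LK3n n) x y =
  bil E8m (pE1 x) (pE1 y) + bil E8m (pE2 x) (pE2 y) + bil Uhyp (pU1 x) (pU1 y) +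
  bil Uhyp (pU2 x) (pU2 y) + bil Uhyp (pU3 x) (pU3 y) + pD x 0 0 * (2 - 2 * n%:Z) * pD y 0 0.
Proof. by rewrite /LK3n !bil_osum bil_const. Qed.

Definition bE1 i := lk3_vec (delta_mx 0 i) 0 0 0 0 0.
Definition bE2 i := lk3_vec 0 (delta_mx 0 i) 0 0 0 0.
Definition bU1 i := lk3_vec 0 0 (delta_mx 0 i) 0 0 0.
Definition bU2 i := lk3_vec 0 0 0 (delta_mx 0 i) 0 0.
Definition bU3 i := lk3_vec 0 0 0 0 (delta_mx 0 i) 0.

Section BasisPairings.
Variable n : nat.
Local Notation B := (bil (LK3n n)).

Ltac pairing := rewrite bil_LK3n !pvecE ?bil0r ?bil_delta ?mxE; ring.
Lemma bil_bE1 x i : B x (bE1 i) = (pE1 x *m E8m) 0 i. Proof. pairing. Qed.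
Lemma bil_bE2 x i : B x (bE2 i) = (pE2 x *m E8m) 0 i. Proof. pairing. Qed.
Lemma bil_bU1 x i : B x (bU1 i) = (pU1 x *m Uhyp) 0 i. Proof. pairing. Qed.
Lemma bil_bU2 x i : B x (bU2 i) = (pU2 x *m Uhyp) 0 i. Proof. pairing. Qed.
Lemma bil_bU3 x i : B x (bU3 i) = (pU3 x *m Uhyp) 0 i. Proof. pairing. Qed.

Definition basis_pairE :=
  (bil_bE1, bil_bE2, bil_bU1, bil_bU2, bil_bU3, pvecE, mul0mx).

End BasisPairings.

(* Only for pairings between basis vectors: on other vectors [mxE] unfolds the matrix products. *)
Ltac basis_pairing := rewrite ?basis_pairE -?rowE ?mxE ?eqxx.

(** * Euclidean descent by Eichler transvections *)

Section Reduction.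
Variable n : nat.
Local Notation G := (LK3n n).
Local Notation B := (bil G).
Local Notation aut := (lattice_auto G).
Local Notation e2 := (bU2 0).
Local Notation f2 := (bU2 1).
Local Notation e3 := (bU3 0).
Local Notation f3 := (bU3 1).

Definition pivot x := B x f3.

Definition reduced x :=
  [&& pivot x %| B x e2, pivot x %| B x f2, pivot x %| B x e3,
      [forall i, pivot x %| B x (bU1 i)], [forall i, pivot x %| B x (bE1 i)]
    & [forall i, pivot x %| B x (bE2 i)]]%Z.

Let Bsym := bilC (trLK3n n).

Lemma hyperbolic_step x u u' : B u u = 0 -> B u' u' = 0 -> B u' u = 1 ->
    B f3 u' = 0 -> B f3 u = 0 -> B u e3 = 0 ->
  exists g, aut g /\ pivot (g x) = (B x u %% pivot x)%Z.
Proof.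
move=> uu u'u' u'u f3u' f3u ue3.
set k := pivot x; set j := - ((B x u %/ k)%Z + 1).
set g1 := eichler G f3 (j *: u') 0; set g2 := eichler G u e3 0.
have auto1 : aut g1.
  by apply: eichler_auto (trLK3n n) _ _ _; rewrite ?bilE ?f3u' ?u'u'; basis_pairing; ring.
have auto2 : aut g2.
  by apply: eichler_auto (trLK3n n) _ _ _; rewrite ?uu ?ue3; basis_pairing; ring.
exists (g2 \o g1); split; first exact: lattice_auto_comp.
rewrite /= /pivot /g2 eichler_pair (Bsym u f3) f3u (Bsym u (g1 x)).
rewrite /g1 !eichler_pair !bilZl (Bsym u' f3) f3u' u'u f3u (Bsym f3 x) -/(pivot x) -/k.
have e3f3 : B e3 f3 = 1 by basis_pairing.
have f3f3 : B f3 f3 = 0 by basis_pairing.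
rewrite e3f3 f3f3 /j; move: (divz_eq (B x u) k).
set q := (B x u %/ k)%Z; set r := (B x u %% k)%Z => ->; ring.
Qed.

Lemma e2_step x : exists g, aut g /\ pivot (g x) = (B x e2 %% pivot x)%Z.
Proof. by apply: (@hyperbolic_step x e2 f2); basis_pairing. Qed.

Lemma f2_step x : exists g, aut g /\ pivot (g x) = (B x f2 %% pivot x)%Z.
Proof. by apply: (@hyperbolic_step x f2 e2); basis_pairing. Qed.

Lemma clear_f2_step x : (pivot x %| B x f2)%Z -> (pivot x %| B x e2)%Z ->
  exists g, aut g /\
    [/\ pivot (g x) = pivot x, B (g x) f2 = 0 & forall w, (pivot x %| B (g x) w - B x w)%Z].
Proof.
move=> /dvdzP[q xf2] ke2; pose g := eichler G f3 ((- q) *: e2) 0.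
have pair_g w :
    B (g x) w = B x w + (pivot x * (- q * B e2 w) - B x e2 * (- q * B f3 w)).
  by rewrite /g eichler_pair !bilZl (Bsym f3 x) (Bsym e2 x) /pivot; ring.
have e2f3 : B e2 f3 = 0 by basis_pairing.
have f3f3 : B f3 f3 = 0 by basis_pairing.
have e2f2 : B e2 f2 = 1 by basis_pairing.
have f3f2 : B f3 f2 = 0 by basis_pairing.
exists g; split; first by apply: eichler_auto (trLK3n n) _ _ _; rewrite ?bilE; basis_pairing; ring.
split=> [||w].
- by rewrite [in LHS]/pivot pair_g e2f3 f3f3 !mulr0 subrr addr0.
- by rewrite pair_g xf2 e2f2 f3f2; ring.
- by rewrite pair_g addrC addKr rpredB ?dvdz_mulr ?dvdz_mull.
Qed.

Lemma U2_transfer_step x w h : B w w = 2 * h -> B f2 w = 0 -> B w e2 = 0 ->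
    B x f2 = 0 -> (pivot x %| B x e2)%Z -> ~~ (pivot x %| B x w)%Z ->
  exists g, [/\ aut g, pivot (g x) = pivot x & ~~ (pivot x %| B (g x) e2)%Z].
Proof.
move=> ww f2w we2 xf2 ke2 kw; set g := eichler G f2 w h.
have pair_g y : B (g x) y = B x y - B x w * B f2 y.
  by rewrite /g eichler_pair (Bsym f2 x) xf2 (Bsym w x); ring.
have f2f2 : B f2 f2 = 0 by basis_pairing.
have f2f3 : B f2 f3 = 0 by basis_pairing.
have f2e2 : B f2 e2 = 1 by basis_pairing.
exists g; split; first exact: (eichler_auto (trLK3n n) f2f2 f2w ww).
  by rewrite [in LHS]/pivot pair_g f2f3 mulr0 subr0.
by apply: contra kw; rewrite pair_g f2e2 mulr1 (rpredDl _ ke2) rpredN.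
Qed.

Lemma descent_step x : ~~ reduced x ->
  exists g s, [/\ aut g, ~~ (pivot x %| s)%Z & pivot (g x) = (s %% pivot x)%Z].
Proof.
move=> nred; set k := pivot x.
case ke2: (k %| B x e2)%Z; last first.
  have [g [autog pg]] := e2_step x.
  by exists g, (B x e2); rewrite ke2.
case kf2: (k %| B x f2)%Z; last first.
  have [g [autog pg]] := f2_step x.
  by exists g, (B x f2); rewrite kf2.
have [g1 [auto1 [pg1 g1xf2 g1x_congr]]] := clear_f2_step kf2 ke2.
have transfer w h : B w w = 2 * h -> B f2 w = 0 -> B w e2 = 0 -> ~~ (k %| B x w)%Z ->
    exists g s, [/\ aut g, ~~ (k %| s)%Z & pivot (g x) = (s %% k)%Z].
  move=> ww f2w we2 kw.
  have kw1 : ~~ (pivot (g1 x) %| B (g1 x) w)%Z.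
    rewrite pg1; apply: contra kw => kw1.
    by have := rpredB kw1 (g1x_congr w); rewrite opprB addrC subrK.
  have ke2_1 : (pivot (g1 x) %| B (g1 x) e2)%Z.
    by rewrite pg1 -(subrK (B x e2) (B (g1 x) e2)) rpredD // g1x_congr.
  have [g2 [auto2 pg2 ke2_2]] := U2_transfer_step ww f2w we2 g1xf2 ke2_1 kw1.
  have [g3 [auto3 pg3]] := e2_step (g2 (g1 x)).
  exists (g3 \o g2 \o g1), (B (g2 (g1 x)) e2); split.
  - by apply: lattice_auto_comp => //; apply: lattice_auto_comp.
  - by move: ke2_2; rewrite pg1.
  - by rewrite /= pg3 pg2 pg1.
case ke3: (k %| B x e3)%Z; last first.
  by apply: (transfer e3 0); rewrite ?ke3 //; basis_pairing.
case kU1: [forall i, k %| B x (bU1 i)]%Z; last first.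
  move/negbT: kU1; rewrite negb_forall => /existsP [i ki].
  by apply: (transfer (bU1 i) 0) => //; basis_pairing.
case kE1: [forall i, k %| B x (bE1 i)]%Z; last first.
  move/negbT: kE1; rewrite negb_forall => /existsP [i ki].
  by apply: (transfer (bE1 i) (-1)) => //; basis_pairing.
case kE2: [forall i, k %| B x (bE2 i)]%Z; last first.
  move/negbT: kE2; rewrite negb_forall => /existsP [i ki].
  by apply: (transfer (bE2 i) (-1)) => //; basis_pairing.
by move: nred; rewrite /reduced -/k ke2 kf2 ke3 kU1 kE1 kE2.
Qed.

Lemma exists_reduced_auto_bounded N x : pivot x != 0 -> (absz (pivot x) <= N)%N ->
  exists g, aut g /\ reduced (g x).
Proof.
elim: N x => [|N IH] x px0 pxN; first by move: px0; rewrite -absz_eq0 -leqn0 pxN.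
case red: (reduced x); first by exists id; split; [exact: lattice_auto_id|].
have [g [s [autog ks pg]]] := descent_step (negbT red).
have pg0 : pivot (g x) != 0 by rewrite pg; apply: contra ks => /eqP/dvdz_mod0P.
have pg_lt : (absz (pivot (g x)) < absz (pivot x))%N.
  by rewrite pg -ltz_nat !abszE ger0_norm ?modz_ge0 ?ltz_mod.
have [g' [autog' red']] := IH (g x) pg0 (leq_trans pg_lt pxN).
by exists (g' \o g); split; first exact: lattice_auto_comp.
Qed.

Lemma exists_reduced_auto x : exists g, aut g /\ reduced (g x).
Proof.
case red: (reduced x); first by exists id; split; [exact: lattice_auto_id|].
have [g [s [autog ks pg]]] := descent_step (negbT red).
have pg0 : pivot (g x) != 0 by rewrite pg; apply: contra ks => /eqP/dvdz_mod0P.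
have [g' [autog' red']] := exists_reduced_auto_bounded pg0 (leqnn _).
by exists (g' \o g); split; first exact: lattice_auto_comp.
Qed.

End Reduction.

(** * Normal form of a primitive isotropic class *)

Section NormalForm.
Variable n : nat.
Local Notation G := (LK3n n).
Local Notation B := (bil G).
Local Notation aut := (lattice_auto G).
Local Notation pivot := (pivot n).
Local Notation f3 := (bU3 1).

Let Bsym := bilC (trLK3n n).

Definition nvec m c k : vL := lk3_vec 0 0 0 0 (uvec m (m * c)) (const_mx k).

Lemma pivotE x : pivot x = pU3 x 0 0.
Proof.
rewrite /pivot bil_bU3 mxE big_ord_recr big_ord1 /=.
rewrite (_ : widen_ord _ _ = 0); last exact: val_inj.
rewrite (_ : ord_max = 1); last exact: val_inj.
by rewrite ![Uhyp _ _]mxE /= mulr0 mulr1 addr0.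
Qed.

Lemma reduced_split y : reduced n y ->
  exists l, pD l = 0 /\ y = pivot y *: l + lk3_vec 0 0 0 0 0 (pD y).
Proof.
case/and5P => ke2 kf2 ke3 /forallP kU1 /andP[/forallP kE1 /forallP kE2].
set k := pivot y.
have [q1 e1] : exists q, pE1 y = k *: q.
  by apply: (dvdz_row_unimodular mulmx_E8m_inv) => i; rewrite -(bil_bE1 n).
have [q2 e2] : exists q, pE2 y = k *: q.
  by apply: (dvdz_row_unimodular mulmx_E8m_inv) => i; rewrite -(bil_bE2 n).
have [q3 e3] : exists q, pU1 y = k *: q.
  by apply: (dvdz_row_unimodular mulmx_Uhyp) => i; rewrite -(bil_bU1 n).
have [q4 e4] : exists q, pU2 y = k *: q.
  by apply: (dvdz_row_unimodular mulmx_Uhyp); apply: ord2_ind; rewrite -(bil_bU2 n).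
have [q5 e5] : exists q, pU3 y = k *: q.
  by apply: (dvdz_row_unimodular mulmx_Uhyp); apply: ord2_ind; rewrite -(bil_bU3 n) ?dvdzz.
exists (lk3_vec q1 q2 q3 q4 q5 0); rewrite pD_vec; split=> //.
by rewrite lk3_vecZ lk3_vecD -e1 -e2 -e3 -e4 -e5 scaler0 !addr0 add0r lk3_vecK.
Qed.

Lemma unit_pivot_normal l : pD l = 0 -> pivot l = 1 ->
  exists T c, [/\ aut T, T l = lk3_vec 0 0 0 0 (uvec 1 c) 0
                & forall t, T (lk3_vec 0 0 0 0 0 t) = lk3_vec 0 0 0 0 0 t].
Proof.
move=> l0 pl1; set a := lk3_vec (- pE1 l) (- pE2 l) (- pU1 l) (- pU2 l) 0 0.
have [h aa] : exists h, B a a = 2 * h.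
  have /dvdzP[h ->] : (2 %| B a a)%Z.
    rewrite bil_LK3n !pvecE bil0l mxE !mul0r addr0.
    by rewrite !rpredD // bil_even_diag ?trE8m ?trUhyp // => i; rewrite !mxE eqxx.
  by exists h; rewrite mulrC.
have f3a : B f3 a = 0 by rewrite Bsym bil_bU3 /a pU3_vec mul0mx mxE.
have f3f3 : B f3 f3 = 0 by basis_pairing.
exists (eichler G f3 a h), (pU3 l 0 1 - (B a l + h)); split.
- exact (eichler_auto (trLK3n n) f3f3 f3a aa).
- rewrite /eichler (Bsym f3 l) -/(pivot l) pl1 scale1r mulr1 -scaleNr.
  rewrite -{1}(lk3_vecK l) l0 /a lk3_vecD lk3_vecZ lk3_vecD !scaler0 !subrr !addr0.
  have u00 : pU3 l 0 0 = 1 by rewrite -pivotE.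
  congr lk3_vec; move: (pU3 l) u00 => u u00.
  by apply/rowP; apply: ord2_ind; rewrite !mxE /= ?u00 ?mulr0 ?mulr1 ?addr0.
- move=> t; rewrite /eichler.
  have f3E : B f3 (lk3_vec 0 0 0 0 0 t) = 0 by rewrite Bsym bil_bU3 pU3_vec mul0mx mxE.
  have aE : B a (lk3_vec 0 0 0 0 0 t) = 0.
    by rewrite bil_LK3n !pvecE !bil0r mxE !mul0r !addr0.
  by rewrite f3E aE mulr0 addr0 !scale0r addr0 subr0.
Qed.

Lemma normal_form x : exists g m c k, aut g /\ g x = nvec m c k.
Proof.
have [g1 [auto1 red]] := exists_reduced_auto n x; set y := g1 x in red *.
have [l [l0 ey]] := reduced_split red; set k := pivot y in ey.
have E0 : B (lk3_vec 0 0 0 0 0 (pD y)) f3 = 0 by rewrite bil_bU3 pU3_vec mul0mx mxE.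
have pivot_split : pivot y = k * pivot l by rewrite {1}ey /pivot bilDl bilZl E0 addr0.
case: (eqVneq k 0) => k0.
  exists g1, 0, 0, (pD y 0 0); split => //.
  by rewrite -/y {1}ey k0 scale0r add0r /nvec mul0r uvec0 const_mx11.
have pl1 : pivot l = 1 by apply: (mulfI k0); rewrite -pivot_split mulr1.
have [T [c [autoT Tl TE]]] := unit_pivot_normal l0 pl1.
have [_ TD TZ _] := autoT.
exists (T \o g1), k, c, (pD y 0 0); split; first exact: lattice_auto_comp.
rewrite /= -/y {1}ey TD TZ Tl TE lk3_vecZ lk3_vecD !scaler0 !add0r addr0.
by rewrite uvecZ mulr1 /nvec const_mx11.
Qed.

End NormalForm.

Section NormalVector.
Variables (n : nat) (m c k : int).
Local Notation G := (LK3n n).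
Local Notation B := (bil G).
Local Notation a := (nvec m c k).

Lemma bil_nvec y :
  B a y = m * pU3 y 0 1 + m * c * pU3 y 0 0 + k * (2 - 2 * n%:Z) * pD y 0 0.
Proof. by rewrite bil_LK3n !pvecE !bil0l bil_Uhyp !mxE !add0r. Qed.

Lemma bil_nvec_self : B a a = 2 * (m * m * c - (n%:Z - 1) * k * k).
Proof. by rewrite bil_nvec /nvec !pvecE uvec_0 uvec_1 mxE; ring. Qed.

Definition nvec_quot (y : vL) : 'rV[int]_(8 + 8 + 2 + 2 + 1) :=
  row_mx (row_mx (row_mx (row_mx (pE1 y) (pE2 y)) (pU1 y)) (pU2 y))
    (const_mx (k * pU3 y 0 0 - m * pD y 0 0)).

Lemma nvec_quotD x y : nvec_quot (x + y) = nvec_quot x + nvec_quot y.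
Proof.
rewrite /nvec_quot !add_row_mx /pE1 /pE2 /pU1 /pU2 /pU3 /pD !linearD /=.
by congr (row_mx _ _); apply/matrixP => i j; rewrite !mxE; ring.
Qed.

Lemma nvec_quotZ (j : int) x : nvec_quot (j *: x) = j *: nvec_quot x.
Proof.
rewrite /nvec_quot !scale_row_mx /pE1 /pE2 /pU1 /pU2 /pU3 /pD !linearZ /=.
by congr (row_mx _ _); apply/matrixP => i j'; rewrite !mxE; ring.
Qed.

Lemma nvec_quot_nvec : nvec_quot a = 0.
Proof.
rewrite /nvec_quot /nvec !pvecE uvec_0 mxE mulrC subrr.
by rewrite const_mx0 !row_mx0.
Qed.

Hypotheses (m0 : m != 0) (cop : coprimez m k)
  (isotropic : m * m * c = (n%:Z - 1) * k * k).

Lemma nvec_quot_ker y : B a y = 0 -> nvec_quot y = 0 -> exists j, y = j *: a.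
Proof.
move=> ay; rewrite /nvec_quot -[0 : 'rV[int]_(8 + 8 + 2 + 2 + 1)]row_mx0.
move=> /eq_row_mx[+ yD]; rewrite -[0 : 'rV[int]_(8 + 8 + 2 + 2)]row_mx0.
move=> /eq_row_mx[+ yU2]; rewrite -[0 : 'rV[int]_(8 + 8 + 2)]row_mx0.
move=> /eq_row_mx[+ yU1]; rewrite -[0 : 'rV[int]_(8 + 8)]row_mx0.
move=> /eq_row_mx[yE1 yE2].
have kD : k * pU3 y 0 0 = m * pD y 0 0.
  by apply/eqP; rewrite -subr_eq0; move/rowP/(_ 0): yD; rewrite !mxE => ->.
have [j yU30] : exists j, pU3 y 0 0 = j * m.
  by apply/dvdzP; rewrite -(Gauss_dvdzr _ cop) kD; exact: dvdz_mulr (dvdzz m).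
have yD0 : pD y 0 0 = j * k by apply: (mulfI m0); rewrite -kD yU30; ring.
have yU31 : pU3 y 0 1 = m * c * j.
  apply/eqP; rewrite -subr_eq0 -(mulrI_eq0 _ (lregP m0)); apply/eqP.
  transitivity (B a y - 2 * j * (m * m * c - (n%:Z - 1) * k * k)).
    by rewrite bil_nvec yU30 yD0; ring.
  by rewrite ay isotropic subrr mulr0 subr0.
exists j; rewrite -(lk3_vecK y) yE1 yE2 yU1 yU2 /nvec lk3_vecZ !scaler0 uvecZ.
rewrite [pU3 y]uvecE yU30 yU31 -[pD y]const_mx11 yD0.
congr lk3_vec; first by congr uvec; ring.
by apply/rowP => i; rewrite !mxE.
Qed.

Lemma nvec_quot_surj z : exists y, B a y = 0 /\ nvec_quot y = z.
Proof.
have [u [v]] := Bezoutz m k; rewrite (eqP cop) => uv.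
have [t tm] : exists t, n%:Z - 1 = t * m.
  by apply/dvdzP; exact: dvdz_coprime_sq cop isotropic.
set s := rsubmx z 0 0; set p := v * s; set r := - (u * s).
exists (lk3_vec (lsubmx (lsubmx (lsubmx (lsubmx z)))) (rsubmx (lsubmx (lsubmx (lsubmx z))))
  (rsubmx (lsubmx (lsubmx z))) (rsubmx (lsubmx z)) (uvec p (- c * p + 2 * t * k * r))
  (const_mx r)); split.
  rewrite bil_nvec !pvecE uvec_0 uvec_1 mxE.
  by transitivity (2 * k * r * (t * m - (n%:Z - 1))); [ring | rewrite tm subrr mulr0].
rewrite /nvec_quot !pvecE uvec_0 mxE.
have -> : k * p - m * r = s.
  by transitivity ((u * m + v * k) * s); [rewrite /p /r; ring | rewrite uv mul1r].
by rewrite /s const_mx11 !hsubmxK.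
Qed.

Lemma nvec_perp_pair x y : B a x = 0 -> B a y = 0 ->
  m * m * (bil Uhyp (pU3 x) (pU3 y) + pD x 0 0 * (2 - 2 * n%:Z) * pD y 0 0) =
  (2 - 2 * n%:Z) * (k * pU3 x 0 0 - m * pD x 0 0) * (k * pU3 y 0 0 - m * pD y 0 0).
Proof.
move=> ax ay; apply/eqP; rewrite -subr_eq0; apply/eqP.
transitivity (m * pU3 x 0 0 * B a y + m * pU3 y 0 0 * B a x -
    2 * pU3 x 0 0 * pU3 y 0 0 * (m * m * c - (n%:Z - 1) * k * k)).
  by rewrite !bil_nvec bil_Uhyp; ring.
by rewrite ax ay isotropic subrr; ring.
Qed.

Lemma nvec_quot_pair x y : B a x = 0 -> B a y = 0 ->
  (B x y)%:~R = bil (Target n m) (intr_mx (nvec_quot x)) (intr_mx (nvec_quot y)).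
Proof.
move=> ax ay; rewrite bil_LK3n /Target bil_osum -!map_lsubmx -!map_rsubmx /nvec_quot.
rewrite !row_mxKl !row_mxKr bil_map_intr !bil_osum !row_mxKl !row_mxKr bil_const.
rewrite -(addrA _ (bil Uhyp (pU3 x) (pU3 y))) intrD; congr (_ + _).
rewrite !map_const_mx ![const_mx _ 0 0]mxE.
have m0' : (m%:~R : rat) != 0 by rewrite intr_eq0.
have := congr1 (fun z : int => z%:~R : rat) (nvec_perp_pair ax ay).
rewrite /= !intrM intrB intrM => key.
by apply: (mulfI (mulf_neq0 m0' m0')); rewrite key; field.
Qed.

Lemma nvec_iso_quot : iso_quot G (fun x => B a x = 0) a (Target n m).
Proof.
exists nvec_quot; split; [|split; [|split]].
- by move=> x y _ _; exact: nvec_quotD.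
- move=> x ax; split; first exact: nvec_quot_ker.
  by case=> j ->; rewrite nvec_quotZ nvec_quot_nvec scaler0.
- exact: nvec_quot_surj.
- exact: nvec_quot_pair.
Qed.

End NormalVector.

Lemma nvec_primitive n m c k : (1 < n)%N -> m * m * c = (n%:Z - 1) * k * k ->
  primitive (nvec m c k) -> m != 0 /\ coprimez m k.
Proof.
move=> n1 isotropic [a0 aprim]; have m0 : m != 0.
  apply: contra a0 => /eqP m0; move: isotropic; rewrite m0 !mul0r => /esym/eqP.
  rewrite -mulrA mulf_eq0 mulf_eq0 orbb subr_eq0 (_ : (n%:Z == 1) = false); last by lia.
  by move=> /eqP k0; rewrite /nvec k0 mul0r uvec0 const_mx0 lk3_vec0.
split=> //; set g := gcdz m k.
have E : nvec m c k = g *: nvec (m %/ g)%Z c (k %/ g)%Z.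
  rewrite /nvec lk3_vecZ !scaler0 uvecZ mulrA [g * _]mulrC !divzK ?dvdz_gcdl //.
  by congr lk3_vec; apply/rowP => i; rewrite !mxE mulrC divzK ?dvdz_gcdr.
by have := aprim g _ E; rewrite /coprimez /g /gcdz ger0_norm // => ->.
Qed.

Lemma nvec_gcd_pairing n m c k d : coprimez m k -> m * m * c = (n%:Z - 1) * k * k ->
  is_gcd_pairing (LK3n n) (nvec m c k) d -> d = `|m|.
Proof.
move=> cop isotropic [d0 [dd dmax]].
have md : (m %| d)%Z.
  apply: dmax => l; rewrite bil_nvec.
  have -> : k * (2 - 2 * n%:Z) * pD l 0 0 = (-2 * k * pD l 0 0) * (n%:Z - 1) by ring.
  apply: rpredD; first apply: rpredD.
  - exact: dvdz_mulr (dvdzz m).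
  - exact: dvdz_mulr (dvdz_mulr _ (dvdzz m)).
  - exact: dvdz_mull (dvdz_coprime_sq cop isotropic).
have dm : (d %| m)%Z.
  move: (dd (bU3 1)); rewrite bil_nvec /bU3 !pvecE !mxE /=.
  by rewrite mulr1 !mulr0 !addr0.
have : absz d = absz m by apply/eqP; rewrite eqn_dvd -!dvdzE md dm.
by move=> /(congr1 Posz); rewrite !abszE ger0_norm.
Qed.

Lemma Target_normr n d : Target n `|d| = Target n d.
Proof. by rewrite /Target intr_norm real_normK // num_real. Qed.

Lemma iso_quot_Qalpha n alpha d : (1 < n)%N -> primitive alpha ->
    bil (LK3n n) alpha alpha = 0 -> is_gcd_pairing (LK3n n) alpha d ->
  iso_quot (LK3n n) (fun x => bil (LK3n n) alpha x = 0) alpha (Target n d).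
Proof.
move=> n1 prim iso gcd; have [g [m [c [k [autog ga]]]]] := normal_form n alpha.
apply: (iso_quot_auto autog); rewrite ga.
have isotropic : m * m * c = (n%:Z - 1) * k * k.
  move: iso; case: (autog) => gB _ _ _; rewrite -gB ga bil_nvec_self => /eqP.
  by rewrite mulf_eq0 subr_eq0 => /orP[//|/eqP].
have [m0 cop] : m != 0 /\ coprimez m k.
  by apply: nvec_primitive n1 isotropic _; rewrite -ga; exact: (primitive_auto autog prim).
have := gcd_pairing_auto autog gcd; rewrite ga => /(nvec_gcd_pairing cop isotropic) ->.
by rewrite Target_normr; exact: (nvec_iso_quot m0 cop isotropic).
Qed.

Theorem lemma4p1 (n : nat) (alpha : 'rV[int]_(8 + 8 + 2 + 2 + 2 + 1)) (d : int)
  (M : 'M[int]_(8 + 8 + 2 + 2 + 2 + 1, 8 + 8 + 2 + 2 + 2 + 2))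
  (v : 'rV[int]_(8 + 8 + 2 + 2 + 2 + 2)) :
  (2 <= n)%N ->
  primitive alpha ->
  bil (LK3n n) alpha alpha = 0 ->
  is_gcd_pairing (LK3n n) alpha d ->
  prim_iso_emb (LK3n n) Mukai M ->
  orth_gen Mukai M v ->
  let beta := alpha *m M in
  iso_quot (LK3n n) (fun x => bil (LK3n n) alpha x = 0) alpha (Target n d) /\
  iso_quot Mukai (fun w => bil Mukai beta w = 0 /\ bil Mukai v w = 0) beta
    (Target n d).
Proof.
move=> n2 prim iso gcd emb vgen beta.
have Qalpha := iso_quot_Qalpha n2 prim iso gcd; split=> //.
have [isoM [injM _]] := emb.
apply: (iso_quot_embed isoM injM _ Qalpha) => w; split.
- case=> betaw vw; have [x xw] := perp_in_image erefl trMukai mulmx_Mukai_inv emb vgen vw.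
  by exists x => //; rewrite -isoM xw.
- case=> x alphax <-; split; first by rewrite /beta isoM.
  by rewrite (bilC trMukai); exact: vgen.1.
Qed.
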